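(* The sets $S^1_3$ and $T^1_3$ are finite, where $S^1_3=\{(k,a,b)\in(\mathbb{R}\setminus A_3)\times\mathbb{R}\times\mathbb{R}: \mathrm{rank}(A^{(k,a,b)}_3)\le1,\ 4a^3+27b^2=0\}\setminus\{(k,0,0):k\in\mathbb{R}\}$ and $T^1_3=\{(k,a,b)\in(\mathbb{R}\setminus C_3)\times\mathbb{R}\times\mathbb{R}: \mathrm{rank}(B^{(k,a,b)}_3)\le1,\ 4a^3+27b^2=0\}\setminus\{(k,0,0):k\in\mathbb{R}\}$.
   Context: For real $k,a,b$, the generalized $k$-FL sequence is $S^{(a,b)}_{k,0}=2b$, $S^{(a,b)}_{k,1}=bk+a$, $S^{(a,b)}_{k,n}=kS^{(a,b)}_{k,n-1}+S^{(a,b)}_{k,n-2}$. $A^{(k,a,b)}_3=\begin{pmatrix}S_1&S_2&S_3\\-S_3&S_1&S_2\\-S_2&-S_3&S_1\end{pmatrix}$ and $B^{(k,a,b)}_3=\begin{pmatrix}S_1&S_2&S_3\\S_3&S_1&S_2\\S_2&S_3&S_1\end{pmatrix}$ with $S_i=S^{(a,b)}_{k,i}$. Define $f_m,g_m\in\mathbb{Z}[T]$ by $f_0=0,f_1=1,g_0=2,g_1=T$, $f_m=Tf_{m-1}+f_{m-2}$, $g_m=Tg_{m-1}+g_{m-2}$; $F_n=f_{n+1}-f_n$, $G_n=g_{n+1}-g_n$, $P_n=f_{n+1}+f_n$, $Q_n=g_{n+1}+g_n$. $A_3=\{k: F_3(k)+1=0\text{ or }G_3(k)+k-2=0\}$ and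 $C_3=\{k: P_3(k)-1=0\text{ or }Q_3(k)-k-2=0\}$ (both contain $0$). The condition $4a^3+27b^2=0$ means the curve $y^2=x^3+ax+b$ is singular. *)

From HB Require Import structures.
From mathcomp Require Import all_boot all_order all_algebra.
From mathcomp Require Import classical_sets cardinality reals.
Set Implicit Arguments. Unset Strict Implicit. Unset Printing Implicit Defensive.
Import Order.TTheory GRing.Theory Num.Theory.
Local Open Scope ring_scope.

Fixpoint lucas_seq (V : nzRingType) (c u0 u1 : V) (n : nat) : V :=
  match n with
  | 0%N => u0
  | S p => match p with
           | 0%N => u1
           | S q => c * lucas_seq c u0 u1 p + lucas_seq c u0 u1 q
           end
  end.

Definition fpoly (m : nat) : {poly int} := lucas_seq 'X 0 1 m.
Definition gpoly (m : nat) : {poly int} := lucas_seq 'X 2%:P 'X m.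

Definition Fpoly (n : nat) : {poly int} := fpoly n.+1 - fpoly n.
Definition Gpoly (n : nat) : {poly int} := gpoly n.+1 - gpoly n.
Definition Ppoly (n : nat) : {poly int} := fpoly n.+1 + fpoly n.
Definition Qpoly (n : nat) : {poly int} := gpoly n.+1 + gpoly n.

Definition evalZ (R : realType) (p : {poly int}) (k : R) : R :=
  (map_poly (fun z : int => z%:~R) p).[k].

Definition FLseq (R : realType) (k a b : R) (n : nat) : R :=
  lucas_seq k (2 * b) (b * k + a) n.

Definition A3 (R : realType) : set R :=
  [set k | evalZ (Fpoly 3) k + 1 = 0 \/ evalZ (Gpoly 3) k + k - 2 = 0].
Definition C3 (R : realType) : set R :=
  [set k | evalZ (Ppoly 3) k - 1 = 0 \/ evalZ (Qpoly 3) k - k - 2 = 0].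

Definition Amat (R : realType) (k a b : R) : 'M[R]_3 :=
  let S := FLseq k a b in
  \matrix_(i < 3, j < 3)
    match nat_of_ord i, nat_of_ord j with
    | 0%N, 0%N => S 1%N | 0%N, 1%N => S 2%N | 0%N, _ => S 3%N
    | 1%N, 0%N => - S 3%N | 1%N, 1%N => S 1%N | 1%N, _ => S 2%N
    | _, 0%N => - S 2%N | _, 1%N => - S 3%N | _, _ => S 1%N
    end.

Definition Bmat (R : realType) (k a b : R) : 'M[R]_3 :=
  let S := FLseq k a b in
  \matrix_(i < 3, j < 3)
    match nat_of_ord i, nat_of_ord j with
    | 0%N, 0%N => S 1%N | 0%N, 1%N => S 2%N | 0%N, _ => S 3%N
    | 1%N, 0%N => S 3%N | 1%N, 1%N => S 1%N | 1%N, _ => S 2%N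
    | _, 0%N => S 2%N | _, 1%N => S 3%N | _, _ => S 1%N
    end.

Definition S13 (R : realType) : set (R * R * R) :=
  [set x | let: (k, a, b) := x in
     ~ A3 k /\ (\rank (Amat k a b) <= 1)%N /\ 4 * a ^+ 3 + 27 * b ^+ 2 = 0
     /\ ~ (a = 0 /\ b = 0)].
Definition T13 (R : realType) : set (R * R * R) :=
  [set x | let: (k, a, b) := x in
     ~ C3 k /\ (\rank (Bmat k a b) <= 1)%N /\ 4 * a ^+ 3 + 27 * b ^+ 2 = 0
     /\ ~ (a = 0 /\ b = 0)].

(* Both sets are in fact empty.  A matrix of rank at most one has vanishing
   2x2 minors; for the first two rows of A_3 the three minors add up to half
   of (S1 + S2)^2 + (S3 - S1)^2 + (S2 + S3)^2, and for B_3 the alternating sum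
   of the minors is half of (S1 - S2)^2 + (S3 - S1)^2 + (S2 - S3)^2.  Hence
   S3 = S1 and S1 = -S2 (resp. S1 = S2).  The recurrence S3 = k S2 + S1 then
   gives k S2 = 0, and k <> 0 because 0 lies in A_3 and in C_3; so S1 = S2 = 0,
   which forces b = a = 0. *)
From mathcomp Require Import all_boot all_order all_algebra.
From mathcomp Require Import classical_sets cardinality reals.
From mathcomp Require Import ring lra.
Set Implicit Arguments.
Unset Strict Implicit.
Unset Printing Implicit Defensive.
Import Order.TTheory GRing.Theory Num.Theory.
Local Open Scope ring_scope.

Lemma det_mx22 (R : comNzRingType) (M : 'M[R]_2) :
  \det M = M 0 0 * M 1 1 - M 0 1 * M 1 0.
Proof.
rewrite (expand_det_row _ 0) !big_ord_recl big_ord0 /cofactor !det_mx11 !mxE /=.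
rewrite (_ : lift 0 0 = 1 :> 'I_2); last exact/val_inj.
rewrite (_ : lift 1 0 = 0 :> 'I_2); last exact/val_inj.
rewrite (_ : ord0 = 0 :> 'I_2); last exact/val_inj.
by rewrite /bump /=; ring.
Qed.

Lemma mxrank_mxsub (F : fieldType) m n m' n' (f : 'I_m' -> 'I_m)
    (g : 'I_n' -> 'I_n) (A : 'M[F]_(m, n)) :
  (\rank (mxsub f g A) <= \rank A)%N.
Proof.
rewrite mxsubrc (leq_trans (mxrankS (rowsub_sub _ _))) //.
by rewrite -mxrank_tr -[leqRHS]mxrank_tr trmx_mxsub mxrankS // rowsub_sub.
Qed.

Lemma mxrank_le1_minor2 (F : fieldType) m n (A : 'M[F]_(m, n)) i1 i2 j1 j2 :
  (\rank A <= 1)%N -> A i1 j1 * A i2 j2 - A i1 j2 * A i2 j1 = 0.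
Proof.
move=> rankA; apply/eqP; apply: contraTT rankA => minor_neq0.
pose f (i : 'I_2) := if i == 0 then i1 else i2.
pose g (j : 'I_2) := if j == 0 then j1 else j2.
have sub_unit : mxsub f g A \in unitmx.
  by rewrite unitmxE unitfE det_mx22 !mxE.
by rewrite -ltnNge (leq_trans _ (mxrank_mxsub f g A)) // mxrank_unit.
Qed.

Lemma sqr_sum3_eq0 (R : realDomainType) (x y z : R) :
  x ^+ 2 + y ^+ 2 + z ^+ 2 = 0 -> [/\ x = 0, y = 0 & z = 0].
Proof.
move/eqP; rewrite !paddr_eq0 ?addr_ge0 ?sqr_ge0 // !sqrf_eq0.
by case/andP => /andP[/eqP -> /eqP ->] /eqP ->.
Qed.

Lemma lucas_seqSS (V : nzRingType) (c u0 u1 : V) n :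
  lucas_seq c u0 u1 n.+2 = c * lucas_seq c u0 u1 n.+1 + lucas_seq c u0 u1 n.
Proof. by []. Qed.

Lemma lucas_seqX_coef0 (R : nzRingType) (u0 u1 : {poly R}) m :
  (lucas_seq 'X u0 u1 m)`_0 = if odd m then u1`_0 else u0`_0.
Proof.
pose P m := (lucas_seq 'X u0 u1 m)`_0 = if odd m then u1`_0 else u0`_0.
suff : forall m, P m /\ P m.+1 by move=> /(_ m) [].
elim=> [|p [IHp IHp1]]; split=> //.
by rewrite /P lucas_seqSS coefD coefXM add0r IHp /= negbK.
Qed.

Lemma evalZ_at0 (R : realType) (p : {poly int}) : evalZ p (0 : R) = (p`_0)%:~R.
Proof. by rewrite /evalZ horner_coef0 coef_map. Qed.

Lemma fpoly_coef0 m : (fpoly m)`_0 = (odd m)%:R.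
Proof. by rewrite /fpoly lucas_seqX_coef0 coef0 coef1; case: (odd m). Qed.

Lemma A3_0 (R : realType) : A3 (0 : R).
Proof.
by left; rewrite evalZ_at0 coefB !fpoly_coef0 /= sub0r rmorphN addNr.
Qed.

Lemma C3_0 (R : realType) : C3 (0 : R).
Proof. by left; rewrite evalZ_at0 coefD !fpoly_coef0 /= add0r subrr. Qed.

Section FLseqRankOne.

Variables (R : realType) (k a b : R).
Local Notation S := (FLseq k a b).

Lemma Amat_rank_le1 : (\rank (Amat k a b) <= 1)%N -> S 1 = - S 2 /\ S 3 = S 1.
Proof.
move=> rankA.
have m01 := mxrank_le1_minor2 0 1 0 1 rankA.
have m02 := mxrank_le1_minor2 0 1 0 2 rankA.
have m12 := mxrank_le1_minor2 0 1 1 2 rankA.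
rewrite !mxE /= in m01 m02 m12.
have [e12 e31 _] : [/\ S 1 + S 2 = 0, S 3 - S 1 = 0 & S 2 + S 3 = 0].
  apply: sqr_sum3_eq0.
  have -> : (S 1 + S 2) ^+ 2 + (S 3 - S 1) ^+ 2 + (S 2 + S 3) ^+ 2 =
    2 * ((S 1 * S 1 - S 2 * - S 3) + (S 1 * S 2 - S 3 * - S 3)
         + (S 2 * S 2 - S 3 * S 1)) by ring.
  by rewrite m01 m02 m12; ring.
by split; lra.
Qed.

Lemma Bmat_rank_le1 : (\rank (Bmat k a b) <= 1)%N -> S 1 = S 2 /\ S 3 = S 1.
Proof.
move=> rankB.
have m01 := mxrank_le1_minor2 0 1 0 1 rankB.
have m02 := mxrank_le1_minor2 0 1 0 2 rankB.
have m12 := mxrank_le1_minor2 0 1 1 2 rankB.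
rewrite !mxE /= in m01 m02 m12.
have [e12 e31 _] : [/\ S 1 - S 2 = 0, S 3 - S 1 = 0 & S 2 - S 3 = 0].
  apply: sqr_sum3_eq0.
  have -> : (S 1 - S 2) ^+ 2 + (S 3 - S 1) ^+ 2 + (S 2 - S 3) ^+ 2 =
    2 * ((S 1 * S 1 - S 2 * S 3) - (S 1 * S 2 - S 3 * S 3)
         + (S 2 * S 2 - S 3 * S 1)) by ring.
  by rewrite m01 m02 m12; ring.
by split; lra.
Qed.

Lemma FLseq_params_eq0 :
  k != 0 -> S 1 = S 2 \/ S 1 = - S 2 -> S 3 = S 1 -> a = 0 /\ b = 0.
Proof.
move=> k_neq0 S12 S31.
have S3E : S 3 = k * S 2 + S 1 by [].
have S2E : S 2 = k * S 1 + 2 * b by [].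
have S1E : S 1 = b * k + a by [].
have kS2_eq0 : k * S 2 = 0 by lra.
have S2_eq0 : S 2 = 0 by apply: (mulfI k_neq0); rewrite mulr0.
have S1_eq0 : S 1 = 0 by case: S12; rewrite S2_eq0 ?oppr0.
have b_eq0 : b = 0 by move: S2E; rewrite S1_eq0 S2_eq0 mulr0; lra.
by split=> //; move: S1E; rewrite S1_eq0 b_eq0 mul0r; lra.
Qed.

End FLseqRankOne.

Lemma S13_eq0 (R : realType) : @S13 R = set0.
Proof.
apply/seteqP; split=> // [[[k a] b]] /= [notA3 [rankA [_ ab_neq0]]].
have k_neq0 : k != 0 by apply: contra_notN notA3 => /eqP ->; exact: A3_0.
have [S12 S31] := Amat_rank_le1 rankA.
by apply/ab_neq0/(FLseq_params_eq0 k_neq0 _ S31); right.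
Qed.

Lemma T13_eq0 (R : realType) : @T13 R = set0.
Proof.
apply/seteqP; split=> // [[[k a] b]] /= [notC3 [rankB [_ ab_neq0]]].
have k_neq0 : k != 0 by apply: contra_notN notC3 => /eqP ->; exact: C3_0.
have [S12 S31] := Bmat_rank_le1 rankB.
by apply/ab_neq0/(FLseq_params_eq0 k_neq0 _ S31); left.
Qed.

Theorem lemma4p10 (R : realType) : finite_set (@S13 R) /\ finite_set (@T13 R).
Proof. by rewrite S13_eq0 T13_eq0; split; exact: finite_set0. Qed.
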